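(* Consider the fixed cost inverse fractional knapsack problem (defined in the context), and let $$L=\max_{i\in I^0}\frac{p_i-\bar z_i}{c_i},\qquad U=\min_{i\in I^1}\frac{p_i+\bar z_i}{c_i},$$ where $\bar z_i=\bar u_i$ for $i\in I^1$ and $\bar z_i=\bar v_i$ for $i\in I^0$. Then the problem is feasible (i.e., there exists a feasible modification making $x^*$ optimal) if and only if $L\le U$.
   Context: Given positive integers $p_i,c_i$ ($i=1,\dots,n$), a budget $b$, and a vector $x^*\in\{0,1\}^n$ with $\sum_{i=1}^n c_i x^*_i=b$. Let $I^1=\{i:x^*_i=1\}$ and $I^0=\{i:x^*_i=0\}$. Given nonnegative integer bounds $\bar u_i,\bar v_i$. A feasible modification is $(u,v)$ with $u_i\in[0,\bar u_i]\cap\mathbb Z$, $v_i\in[0,\bar v_i]\cap\mathbb Z$, giving modified profits $\tilde p_i=p_i+u_i-v_i$; the costs $c_i$ are fixed. The fixed cost inverse fractional knapsack problem asks for a feasible modification such that $x^*$ is an optimal solution of $\max\{\sum_i\tilde p_i x_i:\sum_i c_ix_i\le b,\ x_i\in[0,1]\}$, minimizing a nondecreasing cost of the modification. *)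

From HB Require Import structures.
From mathcomp Require Import all_boot all_order all_algebra.
From mathcomp Require Import constructive_ereal.
Set Implicit Arguments. Unset Strict Implicit. Unset Printing Implicit Defensive.
Import Order.TTheory GRing.Theory Num.Theory.
Local Open Scope ring_scope.

Section FCIFK.
Variables (R : realFieldType) (n : nat).

Definition mod_profit (p u v : 'I_n -> nat) (i : 'I_n) : R :=
  (p i)%:R + (u i)%:R - (v i)%:R.

Definition frac_knapsack_optimal (pt : 'I_n -> R) (c : 'I_n -> nat) (b : nat)
    (xstar : 'I_n -> bool) : Prop :=
  \sum_(i < n) (c i)%:R * (xstar i)%:R <= (b%:R : R) /\
  forall x : 'I_n -> R,
    (forall i, 0 <= x i <= 1) ->
    \sum_(i < n) (c i)%:R * x i <= b%:R ->
    \sum_(i < n) pt i * x i <= \sum_(i < n) pt i * (xstar i)%:R.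

Definition feasible_modification (ubar vbar u v : 'I_n -> nat) : Prop :=
  forall i, (u i <= ubar i)%N /\ (v i <= vbar i)%N.

Definition fcifk_feasible (p c : 'I_n -> nat) (b : nat) (xstar : 'I_n -> bool)
    (ubar vbar : 'I_n -> nat) : Prop :=
  exists u v : 'I_n -> nat,
    feasible_modification ubar vbar u v /\
    frac_knapsack_optimal (mod_profit p u v) c b xstar.

Definition zbar (xstar : 'I_n -> bool) (ubar vbar : 'I_n -> nat) (i : 'I_n) : nat :=
  if xstar i then ubar i else vbar i.

Definition Lbound (p c : 'I_n -> nat) (xstar : 'I_n -> bool) (ubar vbar : 'I_n -> nat)
  : \bar R :=
  (\big[maxe/-oo]_(i < n | ~~ xstar i)
     (((p i)%:R - (zbar xstar ubar vbar i)%:R) / (c i)%:R)%:E)%E.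

Definition Ubound (p c : 'I_n -> nat) (xstar : 'I_n -> bool) (ubar vbar : 'I_n -> nat)
  : \bar R :=
  (\big[mine/+oo]_(i < n | xstar i)
     (((p i)%:R + (zbar xstar ubar vbar i)%:R) / (c i)%:R)%:E)%E.

End FCIFK.

From mathcomp Require Import all_boot all_order all_algebra.
From mathcomp Require Import constructive_ereal.
From mathcomp Require Import lra.
Set Implicit Arguments. Unset Strict Implicit. Unset Printing Implicit Defensive.
Import Order.TTheory GRing.Theory Num.Theory.
Local Open Scope ring_scope.

(* When [x*] exhausts the capacity, it is optimal for profits [pt] iff every
   item outside [x*] has a ratio [pt_i / c_i] at most that of every item
   inside it.  Necessity: move
   one unit of capacity from an item [k] of [I^1] to an item [j] of [I^0].
   Sufficiency: with any threshold [lam >= 0] separating the two groups of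
   ratios, [sum_i (pt_i - lam c_i) x_i] is maximised by [x*] and the capacity
   constraint is tight at [x*].  Since modifications only raise the ratios of
   [I^1] up to [(p_i + ubar_i)/c_i] and lower those of [I^0] down to
   [(p_i - vbar_i)/c_i], the extreme modification is feasible iff some is,
   i.e. iff [L <= U]. *)

Section Separators.
Variables (R : realDomainType) (I : finType).

Lemma bigmaxe_le_bigmine (P Q : pred I) (f g : I -> R) :
  (\big[maxe/-oo]_(i | P i) (f i)%:E <= \big[mine/+oo]_(j | Q j) (g j)%:E)%E <->
  (forall i j, P i -> Q j -> f i <= g j).
Proof.
split=> [fg i j Pi Qj | fg].
  rewrite -lee_fin; apply: le_trans (le_trans fg _).
    exact: (le_bigmax_cond _ (fun i => (f i)%:E) Pi).
  exact: (bigmin_le_cond _ (fun j => (g j)%:E) Qj).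
apply: bigmax_le => [|i Pi]; first exact: leNye.
by apply: le_bigmin => [|j Qj]; [exact: leey | rewrite lee_fin fg].
Qed.

Lemma nonneg_separator (P Q : pred I) (f g : I -> R) :
  (forall i j, P i -> Q j -> f i <= g j) -> (forall j, Q j -> 0 <= g j) ->
  exists2 lam, 0 <= lam &
    (forall i, P i -> f i <= lam) /\ (forall j, Q j -> lam <= g j).
Proof.
move=> fg g_ge0; exists (\big[Num.max/0]_(i | P i) f i).
  by rewrite bigmax_idl le_max lexx.
split=> [i Pi | j Qj]; first exact: le_bigmax_cond.
by apply: bigmax_le => [|i Pi]; [exact: g_ge0 | exact: fg].
Qed.

End Separators.

Section FractionalKnapsack.
Variables (R : realFieldType) (n : nat).

Lemma sum_mul_indicator (f : 'I_n -> R) (j : 'I_n) :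
  \sum_(i < n) f i * (i == j)%:R = f j.
Proof.
rewrite (bigD1 j) //= eqxx mulr1 big1 ?addr0 // => i /negbTE ->.
by rewrite mulr0.
Qed.

Lemma sum_mul_exchange (f y : 'I_n -> R) (j k : 'I_n) (s t : R) :
  \sum_(i < n) f i * (y i + (i == j)%:R * s - (i == k)%:R * t) =
  \sum_(i < n) f i * y i + f j * s - f k * t.
Proof.
under eq_bigr do rewrite mulrBr mulrDr !mulrA.
by rewrite sumrB big_split /= -!mulr_suml !sum_mul_indicator.
Qed.

Variables (c : 'I_n -> nat) (b : nat) (xstar : 'I_n -> bool).
Hypothesis c_gt0 : forall i, (0 < c i)%N.

Let cR_gt0 i : 0 < (c i)%:R :> R. Proof. by rewrite ltr0n. Qed.

Lemma frac_knapsack_optimal_ratio (pt : 'I_n -> R) (j k : 'I_n) :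
  frac_knapsack_optimal pt c b xstar -> ~~ xstar j -> xstar k ->
  pt j / (c j)%:R <= pt k / (c k)%:R.
Proof.
move=> [cap opt] xj xk.
have jk : (j == k) = false by apply: contraNF xj => /eqP ->.
pose x i : R := (xstar i)%:R + (i == j)%:R * (c j)%:R^-1 - (i == k)%:R * (c k)%:R^-1.
have inv_le1 l : (c l)%:R^-1 <= 1 :> R.
  by rewrite invf_le1 // ler1n.
have x01 i : 0 <= x i <= 1.
  rewrite /x; have := inv_le1 j; have := inv_le1 k.
  have : 0 < (c j)%:R^-1 :> R by rewrite invr_gt0.
  have : 0 < (c k)%:R^-1 :> R by rewrite invr_gt0.
  case: (eqVneq i j) => [->|_]; first by rewrite (negbTE xj) jk /=; move=> *; lra.
  case: (eqVneq i k) => [->|_]; first by rewrite xk /=; move=> *; lra.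
  by case: (xstar i) => /= *; lra.
have := opt x x01; rewrite !sum_mul_exchange !divff ?gt_eqF // addrK.
by move=> /(_ cap); lra.
Qed.

Lemma frac_knapsack_optimal_of_threshold (pt : 'I_n -> R) (lam : R) :
  \sum_(i < n) (c i)%:R * (xstar i)%:R = b%:R :> R -> 0 <= lam ->
  (forall i, ~~ xstar i -> pt i / (c i)%:R <= lam) ->
  (forall i, xstar i -> lam <= pt i / (c i)%:R) ->
  frac_knapsack_optimal pt c b xstar.
Proof.
move=> tight lam_ge0 lam_ub lam_lb; split=> [|x x01 cap]; first by rewrite tight.
pose reduced i := pt i - lam * (c i)%:R.
have reduced_le i : reduced i * x i <= reduced i * (xstar i)%:R.
  have /andP[x0 x1] := x01 i; rewrite /reduced.
  case: (boolP (xstar i)) => xi.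
    have := lam_lb i xi; rewrite ler_pdivlMr // => ?.
    by rewrite mulr1 ler_piMr // subr_ge0.
  have := lam_ub i xi; rewrite ler_pdivrMr // => ?.
  by rewrite mulr0 mulr_le0_ge0 // subr_le0.
have sum_reduced y : \sum_(i < n) reduced i * y i =
    \sum_(i < n) pt i * y i - lam * \sum_(i < n) (c i)%:R * y i.
  by rewrite mulr_sumr -sumrB; apply: eq_bigr => i _; rewrite /reduced mulrBl mulrA.
have : \sum_(i < n) reduced i * x i <= \sum_(i < n) reduced i * (xstar i)%:R.
  by apply: ler_sum => i _; exact: reduced_le.
rewrite !sum_reduced tight.
have : lam * \sum_(i < n) (c i)%:R * x i <= lam * b%:R by exact: ler_wpM2l.
lra.
Qed.

End FractionalKnapsack.

Lemma mod_profit_bounds (R : realFieldType) {n : nat} (p : 'I_n -> nat)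
    {ubar vbar u v : 'I_n -> nat} :
  feasible_modification ubar vbar u v -> forall i,
  (p i)%:R - (vbar i)%:R <= mod_profit R p u v i <= (p i)%:R + (ubar i)%:R.
Proof.
move=> feas i; case: (feas i); rewrite -!(ler_nat R) => uub vvb.
have := ler0n R (u i); have := ler0n R (v i).
by rewrite /mod_profit => *; apply/andP; split; lra.
Qed.

Theorem mainTheorem3 (R : realFieldType) (n : nat)
    (p c : 'I_n -> nat) (b : nat) (xstar : 'I_n -> bool) (ubar vbar : 'I_n -> nat)
    (hp : forall i, (0 < p i)%N) (hc : forall i, (0 < c i)%N)
    (hb : (\sum_(i < n) c i * xstar i)%N = b) :
  fcifk_feasible R p c b xstar ubar vbar <->
  (Lbound R p c xstar ubar vbar <= Ubound R p c xstar ubar vbar)%E.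
Proof.
have cR_gt0 i : 0 < (c i)%:R :> R by rewrite ltr0n.
rewrite /Lbound /Ubound bigmaxe_le_bigmine; split.
  case=> u [v [feas opt]] j k xj xk; rewrite /zbar (negbTE xj) xk.
  have /andP[lo _] := mod_profit_bounds R p feas j.
  have /andP[_ hi] := mod_profit_bounds R p feas k.
  apply: le_trans (le_trans (frac_knapsack_optimal_ratio hc opt xj xk) _).
    by rewrite ler_wpM2r // invr_ge0 ltW.
  by rewrite ler_wpM2r // invr_ge0 ltW.
move=> LU; have U_ge0 k : xstar k ->
    0 <= ((p k)%:R + (zbar xstar ubar vbar k)%:R) / (c k)%:R :> R.
  by move=> _; rewrite divr_ge0 ?addr_ge0 // ltW.
have [lam lam_ge0 [lam_ub lam_lb]] := nonneg_separator LU U_ge0.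
exists (fun i => if xstar i then ubar i else 0%N),
       (fun i => if xstar i then 0%N else vbar i).
split=> [i|]; first by case: (xstar i).
apply: (frac_knapsack_optimal_of_threshold hc _ lam_ge0).
- by rewrite -hb natr_sum; apply: eq_bigr => i _; rewrite natrM.
- by move=> i xi; have := lam_ub i xi; rewrite /mod_profit /zbar (negbTE xi) addr0.
- by move=> i xi; have := lam_lb i xi; rewrite /mod_profit /zbar xi subr0.
Qed.
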